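(* Let $(\omega_n)_{n}$ be i.i.d. random variables whose common law has support $[0,1]$, and for $E\in\mathbb{R}$ let $$T_n=\begin{pmatrix}(\omega_n-E)(\omega_n+E)+1&\omega_n-E\\\omega_n+E&1\end{pmatrix}\in SL_2(\mathbb{R}).$$ Let $G$ be the closed subgroup of $SL_2(\mathbb{R})$ generated by the support of the common law of the $T_n$. If $E\in[-3,3]$, then $G$ is not compact and, for every direction $\tilde{x}$ in the projective line $\mathbb{P}(\mathbb{R}^2)$, the orbit $\{g\tilde{x}:g\in G\}$ has at least three elements. *)

From HB Require Import structures.
From mathcomp Require Import all_boot all_order all_algebra.
From mathcomp Require Import all_classical all_reals all_analysis.
Set Implicit Arguments. Unset Strict Implicit. Unset Printing Implicit Defensive.
Import Order.TTheory GRing.Theory Num.Theory.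
Import numFieldNormedType.Exports.
Local Open Scope classical_set_scope.
Local Open Scope ring_scope.

Definition SL2 (R : realType) : set 'M[R]_2 := [set M | \det M = 1].

Definition closed_subgroup_SL2 (R : realType) (H : set 'M[R]_2) : Prop :=
  [/\ H `<=` @SL2 R, H 1%:M,
      (forall a b, H a -> H b -> H (a *m b)),
      (forall a, H a -> H (invmx a)) & closed H].

Definition gen_closed_subgroup (R : realType) (S : set 'M[R]_2) : set 'M[R]_2 :=
  \bigcap_(H in [set H | closed_subgroup_SL2 H /\ S `<=` H]) H.

Definition Tmat (R : realType) (E w : R) : 'M[R]_2 :=
  \matrix_(i < 2, j < 2)
    if (i == 0 :> nat) then
      (if (j == 0 :> nat) then (w - E) * (w + E) + 1 else w - E)
    else
      (if (j == 0 :> nat) then w + E else 1).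

Definition support_R (R : realType) (mu : probability (measurableTypeR R) R)
  : set R :=
  [set x | forall U : set R, open U -> U x -> (0 < mu U)%E].

(* topological support of the law of T(omega), omega ~ mu, i.e. of the
   pushforward of mu by f : R -> 'M_2 *)
Definition support_law (R : realType) (mu : probability (measurableTypeR R) R)
  (f : R -> 'M[R]_2) : set 'M[R]_2 :=
  [set M | forall U : set 'M[R]_2, open U -> U M -> (0 < mu (f @^-1` U))%E].

(* equality in the projective line P(R^2) of the directions of u and v *)
Definition same_direction (R : realType) (u v : 'cV[R]_2) : Prop :=
  exists c : R, c != 0 /\ u = c *: v.

From HB Require Import structures.
From mathcomp Require Import all_boot all_order all_algebra.
From mathcomp Require Import all_classical all_reals all_analysis.
From mathcomp Require Import ring lra.
Import Order.TTheory GRing.Theory Num.Theory.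
Import numFieldNormedType.Exports.
Local Open Scope classical_set_scope.
Local Open Scope ring_scope.
Set Implicit Arguments. Unset Strict Implicit.

(* Since [w |-> T(w)] is continuous and [0, 1] is the support of the law of
   the [omega_n], every [T(w)] with [w] in [0, 1] lies in [G].
   The element [A = T(0)^-1 T(1)] of [G] has determinant 1 and trace 3, so
   [A^2 = 3A - 1] and the upper-right entry of [A^n] grows at least like [n]:
   [G] is unbounded, hence not compact.
   For a direction [x = (x_0, x_1)], let [y_a] be the second coordinate of
   [T(a) x]; then [det (T(a) x, T(b) x) = (b - a) (x_0^2 - y_a y_b)], and
   since [a |-> y_a] is affine, for a fixed [s] at most one [a] solves
   [y_s y_a = x_0^2].  A greedy choice among a few points of [0, 1] therefore
   yields three matrices [T(a)] moving [x] to pairwise distinct directions. *)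

Definition mx22 (R : Type) (a b c d : R) : 'M[R]_2 :=
  \matrix_(i < 2, j < 2)
    if (i == 0 :> nat) then (if (j == 0 :> nat) then a else b)
    else (if (j == 0 :> nat) then c else d).

Lemma continuous_mx (T U : topologicalType) m n (f : T -> 'M[U]_(m, n)) :
  (forall i j, continuous (fun t => f t i j)) -> continuous f.
Proof.
move=> fc t A [P HP sPA].
have near_entry (ij : 'I_m * 'I_n) :
    \forall s \near t, P ij.1 ij.2 (f s ij.1 ij.2).
  exact: fc _ _ _ _ (HP ij.1 ij.2).
apply: filterS (filter_forall _ near_entry) => s Ps.
by apply: sPA => i j; exact: (Ps (i, j)).
Qed.

Lemma continuous_mx22 (T U : topologicalType) (a b c d : T -> U) :
  continuous a -> continuous b -> continuous c -> continuous d ->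
  continuous (fun t => mx22 (a t) (b t) (c t) (d t)).
Proof.
move=> *; apply: continuous_mx => i j.
under [X in continuous X]funext do rewrite mxE.
by case: i => [[|[|//]] ?]; case: j => [[|[|//]] ?].
Qed.

Lemma continuous_Tmat (R : realType) (E : R) : continuous (Tmat E).
Proof.
apply: continuous_mx22 => w; last exact: cvg_cst.
- apply: cvgD; last exact: cvg_cst.
  by apply: cvgM; [apply: cvgB|apply: cvgD];
    first [exact: cvg_id | exact: cvg_cst].
- by apply: cvgB; first [exact: cvg_id | exact: cvg_cst].
- by apply: cvgD; first [exact: cvg_id | exact: cvg_cst].
Qed.

Section mx22_algebra.
Variable R : comNzRingType.

Lemma mul_mx22 (a b c d a' b' c' d' : R) :
  mx22 a b c d *m mx22 a' b' c' d' =
  mx22 (a * a' + b * c') (a * b' + b * d') (c * a' + d * c') (c * b' + d * d').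
Proof.
apply/matrixP => i j; rewrite !mxE !big_ord_recr big_ord0 /= add0r !mxE /=.
by case: i => [[|[|//]] ?]; case: j => [[|[|//]] ?].
Qed.

Lemma scalar_mx22 (k : R) : k%:M = mx22 k 0 0 k.
Proof.
apply/matrixP => i j; rewrite !mxE.
by case: i => [[|[|//]] ?]; case: j => [[|[|//]] ?].
Qed.

Lemma scale_mx22 (k a b c d : R) :
  k *: mx22 a b c d = mx22 (k * a) (k * b) (k * c) (k * d).
Proof.
apply/matrixP => i j; rewrite !mxE.
by case: i => [[|[|//]] ?]; case: j => [[|[|//]] ?].
Qed.

Lemma sub_mx22 (a b c d a' b' c' d' : R) :
  mx22 a b c d - mx22 a' b' c' d' = mx22 (a - a') (b - b') (c - c') (d - d').
Proof.
apply/matrixP => i j; rewrite !mxE.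
by case: i => [[|[|//]] ?]; case: j => [[|[|//]] ?].
Qed.

Lemma sqr_mx22 (a b c d : R) :
  mx22 a b c d ^+ 2 = (a + d) *: mx22 a b c d - (a * d - b * c)%:M.
Proof.
rewrite expr2 -mulmxE mul_mx22 scale_mx22 scalar_mx22 sub_mx22.
by congr mx22; ring.
Qed.

End mx22_algebra.

Lemma invmx_mx22 (R : comUnitRingType) (a b c d : R) :
  a * d - b * c = 1 -> invmx (mx22 a b c d) = mx22 d (- b) (- c) a.
Proof.
move=> det1; have inv : mx22 a b c d *m mx22 d (- b) (- c) a = 1%:M.
  by rewrite mul_mx22 scalar_mx22 -det1; congr mx22; ring.
have [unitM _] := mulmx1_unit inv.
by rewrite -[RHS]mul1mx -(mulVmx unitM) -mulmxA inv mulmx1.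
Qed.

Section gen_closed_subgroup.
Variables (R : realType) (S : set 'M[R]_2).
Local Notation G := (gen_closed_subgroup S).

Lemma gen_closed_subgroup1 : G 1%:M.
Proof. by move=> H [[_ H1 _ _ _] _]. Qed.

Lemma gen_closed_subgroupM a b : G a -> G b -> G (a *m b).
Proof.
by move=> Ga Gb H /[dup] GH [[_ _ HM _ _] _]; apply: HM; [exact: Ga|exact: Gb].
Qed.

Lemma gen_closed_subgroupV a : G a -> G (invmx a).
Proof. by move=> Ga H /[dup] GH [[_ _ _ HV _] _]; apply: HV; exact: Ga. Qed.

Lemma sub_gen_closed_subgroup : S `<=` G.
Proof. by move=> a Sa H [_]; apply. Qed.

Lemma gen_closed_subgroupX a n : G a -> G (a ^+ n).
Proof.
move=> Ga; elim: n => [|n IHn]; first exact: gen_closed_subgroup1.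
by rewrite exprSr; exact: gen_closed_subgroupM.
Qed.

End gen_closed_subgroup.

Lemma support_law_continuous (R : realType)
    (mu : probability (measurableTypeR R) R) (f : R -> 'M[R]_2) w :
  continuous f -> support_R mu w -> support_law mu f (f w).
Proof.
move=> fc supp_w U oU Ufw; apply: supp_w => //.
by apply: open_comp => // x _; exact: fc.
Qed.

Lemma ler_norm_mx_entry (R : realDomainType) m n (M : 'M[R]_(m, n)) i j :
  `|M i j| <= `|M|.
Proof.
rewrite [leRHS]/Num.Def.normr /= mx_normrE.
exact: (le_bigmax _ (fun ij : 'I_m * 'I_n => `|M ij.1 ij.2|) (i, j)).
Qed.

Lemma not_compact_entry_unbounded (R : realType) m n
    (S : set 'M[R]_(m, n)) i j :
  (forall k : nat, exists2 M, S M & k%:R <= M i j) -> ~ compact S.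
Proof.
move=> unbounded /compact_bounded [r [_ Sr]].
have [M SM kM] := unbounded (Num.truncn (r + 1)).+1.
have normM : `|M| <= r + 1 by apply: Sr SM; rewrite ltrDl.
have := truncnS_gt (r + 1); have := ler_norm_mx_entry M i j.
have := ler_norm (M i j); lra.
Qed.

Lemma mulrn_le_expr_entry01 (R : realFieldType) (A : 'M[R]_2) t :
  2 <= t -> A ^+ 2 = t *: A - 1 -> 0 <= A 0 1 ->
  forall n, A 0 1 *+ n <= (A ^+ n) 0 1.
Proof.
move=> t_ge2 sqrA A01_ge0.
suff grow n :
    A 0 1 *+ n <= (A ^+ n) 0 1 /\ (A ^+ n) 0 1 + A 0 1 <= (A ^+ n.+1) 0 1.
  by move=> n; case: (grow n).
elim: n => [|n [IHlow IHstep]].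
  by rewrite expr0 expr1 !mxE /= mulr0n add0r.
have rec : (A ^+ n.+2) 0 1 = t * (A ^+ n.+1) 0 1 - (A ^+ n) 0 1.
  have -> : A ^+ n.+2 = A ^+ n * A ^+ 2 by rewrite -exprD addn2.
  by rewrite sqrA mulrBr mulr1 -scalerAr -exprSr !mxE.
have an_ge0 : 0 <= (A ^+ n) 0 1 by apply: le_trans IHlow; exact: mulrn_wge0.
have : 0 <= (t - 2) * (A ^+ n.+1) 0 1 by rewrite mulr_ge0 // ?subr_ge0 //; lra.
by rewrite rec mulrS; lra.
Qed.

Lemma Tmat_mx22 (R : realType) (E w : R) :
  Tmat E w = mx22 ((w - E) * (w + E) + 1) (w - E) (w + E) 1.
Proof. by []. Qed.

Lemma Tmat_ratio_mx22 (R : realType) (E : R) :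
  invmx (Tmat E 0) *m Tmat E 1 = mx22 (2 + E) 1 (1 - E - E ^+ 2) (1 - E).
Proof.
rewrite !Tmat_mx22 invmx_mx22; last by ring.
by rewrite mul_mx22; congr mx22; ring.
Qed.

Lemma sqr_Tmat_ratio (R : realType) (E : R)
    (A := invmx (Tmat E 0) *m Tmat E 1) :
  A ^+ 2 = 3 *: A - 1.
Proof.
rewrite /A Tmat_ratio_mx22 sqr_mx22.
have -> : (2 + E) * (1 - E) - 1 * (1 - E - E ^+ 2) = 1 by ring.
by have -> : 2 + E + (1 - E) = 3 by ring.
Qed.

Lemma same_direction_cross (R : realType) (u v : 'cV[R]_2) :
  same_direction u v -> u 0 0 * v 1 0 = u 1 0 * v 0 0.
Proof. by move=> [c [_ ->]]; rewrite !mxE; ring. Qed.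

Section Tmat_orbit.
Variables (R : realType) (E : R) (x : 'cV[R]_2).

Lemma Tmat_mulmx0 a :
  (Tmat E a *m x) 0 0 = ((a - E) * (a + E) + 1) * x 0 0 + (a - E) * x 1 0.
Proof.
rewrite mxE !big_ord_recl big_ord0 addr0 !mxE /=.
by congr (_ * x _ _ + _ * x _ _); apply: val_inj.
Qed.

Lemma Tmat_mulmx1 a : (Tmat E a *m x) 1 0 = (a + E) * x 0 0 + x 1 0.
Proof.
rewrite mxE !big_ord_recl big_ord0 addr0 !mxE /= mul1r.
by congr (_ * x _ _ + x _ _); apply: val_inj.
Qed.

Local Notation y a := ((Tmat E a *m x) 1 0).

Lemma not_same_direction_Tmat a b : a != b -> y a * y b != x 0 0 ^+ 2 ->
  ~ same_direction (Tmat E a *m x) (Tmat E b *m x).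
Proof.
move=> neq_ab yy /same_direction_cross/eqP; rewrite -subr_eq0.
have -> : (Tmat E a *m x) 0 0 * y b - y a * (Tmat E b *m x) 0 0 =
    (b - a) * (x 0 0 ^+ 2 - y a * y b).
  by rewrite !Tmat_mulmx0 !Tmat_mulmx1; ring.
by apply/negP; rewrite mulf_neq0 // subr_eq0 // eq_sym.
Qed.

Lemma Tmat_partner_unique s a b : x != 0 ->
  y s * y a = x 0 0 ^+ 2 -> y s * y b = x 0 0 ^+ 2 -> a = b.
Proof.
rewrite !Tmat_mulmx1 => x_neq0 ysa ysb.
have [p0 | p_neq0] := eqVneq (x 0 0) 0.
  move: ysa; rewrite p0 !mulr0 !add0r expr0n /= => /eqP.
  rewrite mulf_eq0 orbb => q0.
  suff x0 : x = 0 by rewrite x0 eqxx in x_neq0.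
  apply/matrixP => i j; rewrite mxE.
  case: i => [[|[|//]] ?]; case: j => [[|//] ?];
    [rewrite -p0 | rewrite -(eqP q0)]; congr (x _ _); exact: val_inj.
have ys_neq0 : (s + E) * x 0 0 + x 1 0 != 0.
  apply: contra_neq p_neq0 => ys0; move: ysa.
  by rewrite ys0 mul0r => /esym/eqP; rewrite expf_eq0 => /andP[_ /eqP].
have /eqP : (a - b) * x 0 0 = 0.
  apply: (mulfI ys_neq0); rewrite mulr0 -(subrr (x 0 0 ^+ 2)) -{1}ysa -ysb.
  ring.
by rewrite mulf_eq0 (negbTE p_neq0) orbF subr_eq0 => /eqP.
Qed.

End Tmat_orbit.

Section pick_avoiding.
Variables (T : eqType) (bad : T -> T -> bool).
Hypothesis bad_unique : forall s a b, bad s a -> bad s b -> a = b.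

Lemma pick_avoiding1 s u1 u2 : u1 != u2 ->
  exists u, (u = u1 \/ u = u2) /\ ~~ bad s u.
Proof.
move=> n12; have [b1|] := boolP (bad s u1); last by exists u1; split; [left|].
have [b2|] := boolP (bad s u2); last by exists u2; split; [right|].
by rewrite (bad_unique b1 b2) eqxx in n12.
Qed.

Lemma pick_avoiding2 s1 s2 u1 u2 u3 : u1 != u2 -> u1 != u3 -> u2 != u3 ->
  exists u, (u = u1 \/ u = u2 \/ u = u3) /\ ~~ bad s1 u /\ ~~ bad s2 u.
Proof.
move=> n12 n13 n23.
have [b1|] := boolP (bad s1 u1 || bad s2 u1); last first.
  by rewrite negb_or => /andP ok; exists u1; split; [left|].
have [b2|] := boolP (bad s1 u2 || bad s2 u2); last first.
  by rewrite negb_or => /andP ok; exists u2; split; [right; left|].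
have [b3|] := boolP (bad s1 u3 || bad s2 u3); last first.
  by rewrite negb_or => /andP ok; exists u3; split; [right; right|].
exfalso; move: n12 n13 n23.
by case/orP: b1 => b1; case/orP: b2 => b2; case/orP: b3 => b3;
  first [rewrite (bad_unique b1 b2) eqxx | rewrite (bad_unique b1 b3) eqxx
        | rewrite (bad_unique b2 b3) eqxx].
Qed.

End pick_avoiding.

Theorem mainTheorem15 (R : realType) (mu : probability (measurableTypeR R) R)
  (E : R) :
  support_R mu = [set x : R | 0 <= x <= 1] ->
  -3 <= E <= 3 ->
  let G := gen_closed_subgroup (support_law mu (Tmat E)) in
  ~ compact G /\
  (forall x : 'cV[R]_2, x != 0 ->
     exists g1 g2 g3, [/\ G g1, G g2 & G g3] /\
       [/\ ~ same_direction (g1 *m x) (g2 *m x),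
           ~ same_direction (g1 *m x) (g3 *m x) &
           ~ same_direction (g2 *m x) (g3 *m x)]).
Proof.
move=> supp_mu _ G.
have GT w : 0 <= w <= 1 -> G (Tmat E w).
  move=> w01; apply: sub_gen_closed_subgroup.
  by apply: (support_law_continuous (@continuous_Tmat _ E)); rewrite supp_mu.
split.
  pose A := invmx (Tmat E 0) *m Tmat E 1.
  have GA : G A.
    apply: gen_closed_subgroupM; [apply: gen_closed_subgroupV|];
      by apply: GT; lra.
  apply: (@not_compact_entry_unbounded _ _ _ _ 0 1) => k.
  exists (A ^+ k); first exact: gen_closed_subgroupX.
  have A01 : A 0 1 = 1 by rewrite /A Tmat_ratio_mx22 mxE.
  have := @mulrn_le_expr_entry01 _ A 3 ltac:(lra) (sqr_Tmat_ratio E)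
    ltac:(lra) k.
  by rewrite A01.
move=> x x_neq0.
pose bad a b := (Tmat E a *m x) 1 0 * (Tmat E b *m x) 1 0 == x 0 0 ^+ 2.
have bad_unique s a b : bad s a -> bad s b -> a = b.
  by move=> /eqP + /eqP; exact: Tmat_partner_unique.
have [w [w_def good0w]] :=
  @pick_avoiding1 _ bad bad_unique 0 1 (1 / 2) ltac:(apply/eqP; lra).
have [u [u_def [good0u goodwu]]] :=
  @pick_avoiding2 _ bad bad_unique 0 w (1 / 4) (3 / 4) (1 / 8)
    ltac:(apply/eqP; lra) ltac:(apply/eqP; lra) ltac:(apply/eqP; lra).
exists (Tmat E 0), (Tmat E w), (Tmat E u).
split; first by split; apply: GT; lra.
by split; apply: not_same_direction_Tmat => //; apply/eqP; lra.
Qed.
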